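(* Let $E$ be a separable real Banach space and $g$ a linear isometric automorphism of $E$ with $g\neq\mathrm{id}$. Then there exist $x\in E$ and $\lambda\in E^*$ such that $\lambda$ norms $x$ but does not norm $gx$, i.e., $\|\lambda\|=\|x\|=1$, $\lambda(x)=1$ and $\lambda(gx)<1$. *)

From Stdlib Require Import Reals.
Open Scope R_scope.

Record NormedSpace := {
  carrier :> Type;
  vzero : carrier;
  vadd : carrier -> carrier -> carrier;
  vopp : carrier -> carrier;
  vscal : R -> carrier -> carrier;
  norm : carrier -> R;
  vadd_assoc : forall x y z, vadd x (vadd y z) = vadd (vadd x y) z;
  vadd_comm : forall x y, vadd x y = vadd y x;
  vadd_0 : forall x, vadd x vzero = x;
  vadd_opp : forall x, vadd x (vopp x) = vzero;
  vscal_1 : forall x, vscal 1 x = x;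
  vscal_assoc : forall a b x, vscal a (vscal b x) = vscal (a * b) x;
  vscal_distr_v : forall a x y, vscal a (vadd x y) = vadd (vscal a x) (vscal a y);
  vscal_distr_s : forall a b x, vscal (a + b) x = vadd (vscal a x) (vscal b x);
  norm_nonneg : forall x, 0 <= norm x;
  norm_eq0 : forall x, norm x = 0 -> x = vzero;
  norm_scal : forall a x, norm (vscal a x) = Rabs a * norm x;
  norm_triangle : forall x y, norm (vadd x y) <= norm x + norm y
}.

Arguments vzero {_}.
Arguments vadd {_} _ _.
Arguments vopp {_} _.
Arguments vscal {_} _ _.
Arguments norm {_} _.

Definition vsub {E : NormedSpace} (x y : E) : E := vadd x (vopp y).

Definition cauchy_seq {E : NormedSpace} (u : nat -> E) : Prop :=
  forall eps, 0 < eps -> exists N, forall m n, (N <= m)%nat -> (N <= n)%nat ->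
    norm (vsub (u m) (u n)) < eps.

Definition converges_to {E : NormedSpace} (u : nat -> E) (l : E) : Prop :=
  forall eps, 0 < eps -> exists N, forall n, (N <= n)%nat -> norm (vsub (u n) l) < eps.

Definition complete (E : NormedSpace) : Prop :=
  forall u : nat -> E, cauchy_seq u -> exists l, converges_to u l.

Definition separable (E : NormedSpace) : Prop :=
  exists d : nat -> E, forall x eps, 0 < eps -> exists n, norm (vsub x (d n)) < eps.

Definition is_linear {E F : NormedSpace} (f : E -> F) : Prop :=
  (forall x y, f (vadd x y) = vadd (f x) (f y)) /\
  (forall a x, f (vscal a x) = vscal a (f x)).

Definition is_linear_functional {E : NormedSpace} (f : E -> R) : Prop :=
  (forall x y, f (vadd x y) = f x + f y) /\
  (forall a x, f (vscal a x) = a * f x).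

Definition in_dual {E : NormedSpace} (lam : E -> R) : Prop :=
  is_linear_functional lam /\ exists C, forall x, Rabs (lam x) <= C * norm x.

Definition dual_norm_is {E : NormedSpace} (lam : E -> R) (r : R) : Prop :=
  is_lub (fun t => exists y : E, norm y <= 1 /\ t = Rabs (lam y)) r.

Definition linear_isometric_automorphism {E : NormedSpace} (g : E -> E) : Prop :=
  is_linear g /\ (forall x, norm (g x) = norm x) /\
  (forall x y, g x = g y -> x = y) /\ (forall y, exists x, g x = y).

Definition norms {E : NormedSpace} (lam : E -> R) (x : E) : Prop :=
  dual_norm_is lam 1 /\ norm x = 1 /\ lam x = 1.

(* Norming functionals come from a countable Hahn-Banach argument: flattening
   the norm successively along u and along the terms of a dense sequence gives
   a decreasing sequence of sublinear functionals; its infimum is sublinear and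
   odd on a dense set, hence linear, contractive, and equal to ||u|| = 1 at u.
   If g x0 <> x0, apply this to u = z / ||z|| with z = g x0 - x0.  If every
   norming functional of a unit vector also normed its image, lam would be 1 on
   the whole orbit of u, so lam (g^N x0) = lam x0 + N ||z|| would grow without
   bound, although |lam (g^N x0)| <= ||x0||. *)

From Stdlib Require Import Reals Lra Lia.
From Stdlib Require Import Classical ClassicalEpsilon FunctionalExtensionality.
Open Scope R_scope.

Definition bounded_below {T : Type} (f : T -> R) : Prop :=
  exists m, forall t, m <= f t.

Lemma Inf_set_bound {T} (f : T -> R) : bounded_below f /\ inhabited T ->
  bound (fun y => exists t, y = - f t).
Proof. intros [[m Hm] _]. exists (-m). intros y [t ->]. specialize (Hm t). lra. Qed.

Lemma Inf_set_inhabited {T} (f : T -> R) : bounded_below f /\ inhabited T ->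
  exists y, exists t, y = - f t.
Proof. intros [_ [t]]. exists (- f t), t; reflexivity. Qed.

(* Junk value 0 when f is unbounded below or T is empty. *)
Definition Inf {T : Type} (f : T -> R) : R :=
  match excluded_middle_informative (bounded_below f /\ inhabited T) with
  | left H => - proj1_sig (completeness _ (Inf_set_bound f H) (Inf_set_inhabited f H))
  | right _ => 0
  end.

Lemma Inf_le {T} (f : T -> R) : bounded_below f -> forall t, Inf f <= f t.
Proof.
  intros Hb t. unfold Inf. destruct excluded_middle_informative as [H|H].
  - destruct (completeness _ _ _) as [l [Hub Hl]]; simpl.
    assert (- f t <= l) by (apply Hub; exists t; reflexivity). lra.
  - exfalso. apply H. split; [exact Hb | exact (inhabits t)].
Qed.

Lemma le_Inf {T} (f : T -> R) (t0 : T) m : (forall t, m <= f t) -> m <= Inf f.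
Proof.
  intros Hm. unfold Inf; destruct excluded_middle_informative as [H|H].
  - destruct (completeness _ _ _) as [l [Hub Hl]]; simpl.
    assert (l <= -m). { apply Hl. intros y [t ->]. specialize (Hm t). lra. } lra.
  - exfalso; apply H; split; [exists m; exact Hm | exact (inhabits t0)].
Qed.

Lemma Inf_le_Inf {I J} (f : I -> R) (h : J -> R) (i0 : I) :
  bounded_below h -> (forall i, exists j, h j <= f i) -> Inf h <= Inf f.
Proof.
  intros Hb Hc. apply (le_Inf _ i0). intros i. destruct (Hc i) as [j Hj].
  pose proof (Inf_le h Hb j). lra.
Qed.

Lemma Inf_eq_cofinal {I J} (f : I -> R) (h : J -> R) (i0 : I) (j0 : J) :
  bounded_below f -> bounded_below h ->
  (forall i, exists j, h j <= f i) -> (forall j, exists i, f i <= h j) -> Inf h = Inf f.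
Proof. intros. apply Rle_antisym; apply Inf_le_Inf; assumption. Qed.

Lemma bounded_below_plus_const {T} (f : T -> R) c :
  bounded_below f -> bounded_below (fun t => f t + c).
Proof. intros [m Hm]. exists (m + c). intros t. specialize (Hm t). lra. Qed.

Lemma Inf_plus_const {T} (f : T -> R) (t0 : T) c :
  bounded_below f -> Inf (fun t => f t + c) = Inf f + c.
Proof.
  intros Hf. pose proof (bounded_below_plus_const f c Hf) as Hb. destruct Hf as [m Hm].
  apply Rle_antisym.
  - enough (Inf (fun t => f t + c) - c <= Inf f) by lra.
    apply (le_Inf _ t0). intros t. pose proof (Inf_le _ Hb t). simpl in *. lra.
  - apply (le_Inf _ t0). intros t. pose proof (Inf_le f (ex_intro _ m Hm) t). lra.
Qed.

Lemma bounded_below_scal {T} (f : T -> R) a :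
  0 <= a -> bounded_below f -> bounded_below (fun t => a * f t).
Proof.
  intros Ha [m Hm]. exists (a * m). intros t. apply Rmult_le_compat_l; [lra | apply Hm].
Qed.

Lemma Inf_scal {T} (f : T -> R) (t0 : T) a :
  0 < a -> bounded_below f -> Inf (fun t => a * f t) = a * Inf f.
Proof.
  intros Ha Hf. pose proof (bounded_below_scal f a ltac:(lra) Hf) as Hb.
  destruct Hf as [m Hm].
  apply Rle_antisym.
  - set (h := fun t => a * f t) in *.
    assert (H : Inf h / a <= Inf f).
    { apply (le_Inf _ t0). intros t. pose proof (Inf_le _ Hb t) as Ht.
      apply Rmult_le_reg_l with a; [lra|].
      replace (a * (Inf h / a)) with (Inf h) by (field; lra). exact Ht. }
    replace (Inf h) with (a * (Inf h / a)) by (field; lra).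
    apply Rmult_le_compat_l; lra.
  - apply (le_Inf _ t0). intros t.
    apply Rmult_le_compat_l; [lra | exact (Inf_le f (ex_intro _ m Hm) t)].
Qed.

Lemma Inf_add_le {I J K} (f : I -> R) (g : J -> R) (h : K -> R) (i0 : I) (j0 : J) :
  bounded_below h -> (forall i j, exists k, h k <= f i + g j) -> Inf h <= Inf f + Inf g.
Proof.
  intros Hb Hc.
  assert (Hg : forall i, Inf h - f i <= Inf g).
  { intros i. apply (le_Inf _ j0). intros j. destruct (Hc i j) as [k Hk].
    pose proof (Inf_le h Hb k). lra. }
  enough (Inf h - Inf g <= Inf f) by lra.
  apply (le_Inf _ i0). intros i. specialize (Hg i). lra.
Qed.

Section VectorAlgebra.
Variable E : NormedSpace.
Implicit Types x y z : E.

Lemma vadd_0l x : vadd vzero x = x.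
Proof. rewrite vadd_comm; apply vadd_0. Qed.

Lemma vadd_cancel x y z : vadd x y = vadd x z -> y = z.
Proof.
  intros H.
  assert (H0 : vadd (vopp x) (vadd x y) = vadd (vopp x) (vadd x z)) by now rewrite H.
  rewrite !vadd_assoc, (vadd_comm _ (vopp x) x), vadd_opp, !vadd_0l in H0. exact H0.
Qed.

Lemma vscal_0l x : vscal 0 x = vzero.
Proof.
  apply (vadd_cancel (vscal 0 x)). rewrite vadd_0, <- vscal_distr_s, Rplus_0_r.
  reflexivity.
Qed.

Lemma vscal_0r a : vscal a (@vzero E) = vzero.
Proof. rewrite <- (vscal_0l vzero), vscal_assoc, Rmult_0_r. reflexivity. Qed.

Lemma vopp_scal x : vopp x = vscal (-1) x.
Proof.
  apply (vadd_cancel x). rewrite vadd_opp.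
  rewrite <- (vscal_1 _ x) at 1. rewrite <- vscal_distr_s, Rplus_opp_r, vscal_0l.
  reflexivity.
Qed.

Lemma norm_opp x : norm (vopp x) = norm x.
Proof. rewrite vopp_scal, norm_scal, Rabs_left by lra. ring. Qed.

Lemma vadd_subK x y : vadd (vadd x y) (vopp x) = y.
Proof. rewrite (vadd_comm _ x y), <- vadd_assoc, vadd_opp, vadd_0. reflexivity. Qed.

Lemma vsubK x y : vadd (vsub x y) y = x.
Proof.
  unfold vsub. rewrite <- vadd_assoc, (vadd_comm _ (vopp y) y), vadd_opp, vadd_0.
  reflexivity.
Qed.

Lemma vsub_eq0 x y : vsub x y = vzero -> x = y.
Proof. intros H. rewrite <- (vsubK x y), H. apply vadd_0l. Qed.

Lemma norm_vsub_pos x y : x <> y -> 0 < norm (vsub x y).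
Proof.
  intros Hxy. destruct (Rle_lt_or_eq_dec _ _ (norm_nonneg _ (vsub x y))) as [|H0];
    [assumption|].
  exfalso. apply Hxy, vsub_eq0, norm_eq0. symmetry. exact H0.
Qed.

Lemma norm_normalize x : 0 < norm x -> norm (vscal (/ norm x) x) = 1.
Proof.
  intros Hx. rewrite norm_scal, Rabs_pos_eq by (apply Rlt_le, Rinv_0_lt_compat, Hx).
  field. lra.
Qed.

Lemma normalizeK x : 0 < norm x -> vscal (norm x) (vscal (/ norm x) x) = x.
Proof. intros Hx. rewrite vscal_assoc, Rinv_r, vscal_1 by lra. reflexivity. Qed.

Lemma vaddACA (a b c d : E) : vadd (vadd a b) (vadd c d) = vadd (vadd a c) (vadd b d).
Proof.
  rewrite !vadd_assoc; f_equal; rewrite <- !vadd_assoc; f_equal; apply vadd_comm.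
Qed.

Lemma vaddAC x y z : vadd (vadd x y) z = vadd (vadd x z) y.
Proof. rewrite <- !vadd_assoc, (vadd_comm _ y z). reflexivity. Qed.

Lemma vopp_add x y : vopp (vadd x y) = vadd (vopp x) (vopp y).
Proof. rewrite !vopp_scal. apply vscal_distr_v. Qed.

End VectorAlgebra.

Definition contractive {E : NormedSpace} (lam : E -> R) : Prop :=
  forall x, Rabs (lam x) <= norm x.

Section HahnBanach.
Variable E : NormedSpace.
Implicit Types x y : E.

Definition dominated_sublinear (p : E -> R) : Prop :=
  (forall x y, p (vadd x y) <= p x + p y) /\
  (forall a x, 0 < a -> p (vscal a x) = a * p x) /\
  (forall x, p x <= norm x).

Lemma norm_dominated_sublinear : dominated_sublinear norm.
Proof.
  split; [apply norm_triangle | split; [|intros; lra]].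
  intros a x Ha. rewrite norm_scal, Rabs_pos_eq; lra.
Qed.

Section Properties.
Variables (p : E -> R) (Hp : dominated_sublinear p).

Lemma sublinear_zero : p vzero = 0.
Proof.
  destruct Hp as [_ [Hh _]]. pose proof (Hh 2 vzero ltac:(lra)) as H.
  rewrite vscal_0r in H. lra.
Qed.

Lemma sublinear_opp_ge0 x : 0 <= p x + p (vopp x).
Proof.
  destruct Hp as [Ha _]. rewrite <- sublinear_zero, <- (vadd_opp _ x). apply Ha.
Qed.

Lemma sublinear_ge_opp_norm x : - norm x <= p x.
Proof.
  pose proof (sublinear_opp_ge0 x). destruct Hp as [_ [_ Hn]].
  pose proof (Hn (vopp x)). rewrite norm_opp in *. lra.
Qed.

Lemma sublinear_scal_ge0 a x : 0 <= a -> p (vscal a x) = a * p x.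
Proof.
  intros Ha. destruct (Req_dec a 0) as [->|Ha0].
  - rewrite vscal_0l, sublinear_zero. ring.
  - apply Hp; lra.
Qed.

End Properties.

(* [flatten p e] is the largest functional below [p] that is affine along [e]
   with slope [p e]. *)
Definition flatten (p : E -> R) (e x : E) : R :=
  Inf (fun t : R => p (vadd x (vscal t e)) - t * p e).

Section Flatten.
Variables (p : E -> R) (Hp : dominated_sublinear p) (e : E).

Lemma flatten_bounded_below x :
  bounded_below (fun t : R => p (vadd x (vscal t e)) - t * p e).
Proof.
  exists (- p (vopp x)). intros t.
  pose proof (sublinear_opp_ge0 p Hp e).
  pose proof Hp as [Ha _].
  assert (H1 : p (vscal t e) <= p (vadd x (vscal t e)) + p (vopp x)).
  { rewrite <- (vadd_subK _ x (vscal t e)) at 1. apply Ha. }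
  destruct (Rle_lt_dec 0 t) as [Ht|Ht].
  - rewrite sublinear_scal_ge0 in H1 by assumption. lra.
  - assert (Hte : p (vscal t e) = - t * p (vopp e)).
    { rewrite <- sublinear_scal_ge0 by (assumption || lra).
      rewrite vopp_scal, vscal_assoc. do 2 f_equal. ring. }
    nra.
Qed.

Lemma flatten_le x : flatten p e x <= p x.
Proof.
  unfold flatten. eapply Rle_trans; [apply (Inf_le _ (flatten_bounded_below x) 0)|].
  rewrite vscal_0l, vadd_0. lra.
Qed.

Lemma flatten_dominated_sublinear : dominated_sublinear (flatten p e).
Proof.
  pose proof Hp as [Ha [Hh Hn]]. split; [|split].
  - intros x y. apply (Inf_add_le _ _ _ 0 0); [apply flatten_bounded_below|].
    intros t s. exists (t + s).
    rewrite vscal_distr_s, vaddACA.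
    specialize (Ha (vadd x (vscal t e)) (vadd y (vscal s e))). lra.
  - intros a x Ha0. unfold flatten. rewrite <- Inf_scal by
      (exact 0 || assumption || apply flatten_bounded_below).
    apply (Inf_eq_cofinal _ _ 0 0).
    + apply bounded_below_scal; [lra | apply flatten_bounded_below].
    + apply flatten_bounded_below.
    + intros t. exists (a * t).
      rewrite <- vscal_assoc, <- vscal_distr_v, Hh by assumption. lra.
    + intros t. exists (t / a).
      replace (vadd (vscal a x) (vscal t e)) with (vscal a (vadd x (vscal (t / a) e)))
        by (rewrite vscal_distr_v, vscal_assoc; do 2 f_equal; field; lra).
      rewrite Hh by assumption. right. field. lra.
  - intros x. eapply Rle_trans; [apply flatten_le | apply Hn].
Qed.

Lemma flatten_shift_dir x s : flatten p e (vadd x (vscal s e)) = flatten p e x + s * p e.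
Proof.
  unfold flatten. rewrite <- Inf_plus_const by (exact 0 || apply flatten_bounded_below).
  apply (Inf_eq_cofinal _ _ 0 0).
  - apply bounded_below_plus_const, flatten_bounded_below.
  - apply flatten_bounded_below.
  - intros t. exists (t - s). rewrite <- vadd_assoc, <- vscal_distr_s.
    replace (s + (t - s)) with t by ring. lra.
  - intros t. exists (s + t). rewrite <- vadd_assoc, <- vscal_distr_s. lra.
Qed.

Lemma flatten_shift_affine e' c :
  (forall x s, p (vadd x (vscal s e')) = p x + s * c) ->
  forall x s, flatten p e (vadd x (vscal s e')) = flatten p e x + s * c.
Proof.
  intros Hpe' x s. unfold flatten.
  rewrite <- Inf_plus_const by (exact 0 || apply flatten_bounded_below).
  f_equal. apply functional_extensionality. intros t.
  rewrite vaddAC, Hpe'. ring.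
Qed.

End Flatten.

Section Flattening.
Variable dirs : nat -> E.

Fixpoint flattened (n : nat) : E -> R :=
  match n with 0 => norm | S n => flatten (flattened n) (dirs n) end.

Lemma flattened_dominated_sublinear n : dominated_sublinear (flattened n).
Proof.
  induction n; simpl.
  - apply norm_dominated_sublinear.
  - apply flatten_dominated_sublinear, IHn.
Qed.

Lemma flattened_antitone n m : (n <= m)%nat -> forall x, flattened m x <= flattened n x.
Proof.
  intros Hnm. induction Hnm; intros x; [lra|].
  eapply Rle_trans; [apply flatten_le, flattened_dominated_sublinear | apply IHHnm].
Qed.

Lemma flattened_shift k n : (k < n)%nat -> forall x s,
  flattened n (vadd x (vscal s (dirs k))) = flattened n x + s * flattened k (dirs k).
Proof.
  intros Hkn. induction Hkn; intros x s; simpl.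
  - apply flatten_shift_dir, flattened_dominated_sublinear.
  - apply flatten_shift_affine; [apply flattened_dominated_sublinear | apply IHHkn].
Qed.

Lemma flattened_bounded_below x : bounded_below (fun n => flattened n x).
Proof.
  exists (- norm x). intros n.
  apply sublinear_ge_opp_norm, flattened_dominated_sublinear.
Qed.

Definition flattened_inf (x : E) : R := Inf (fun n => flattened n x).

Lemma flattened_inf_le n x : flattened_inf x <= flattened n x.
Proof. apply (Inf_le _ (flattened_bounded_below x)). Qed.

Lemma flattened_inf_shift k x s :
  flattened_inf (vadd x (vscal s (dirs k))) = flattened_inf x + s * flattened k (dirs k).
Proof.
  unfold flattened_inf.
  rewrite <- Inf_plus_const by (exact 0%nat || apply flattened_bounded_below).
  apply (Inf_eq_cofinal _ _ 0%nat 0%nat).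
  - apply bounded_below_plus_const, flattened_bounded_below.
  - apply flattened_bounded_below.
  - intros n. exists (max n (S k)). rewrite flattened_shift by lia.
    pose proof (flattened_antitone n (max n (S k)) ltac:(lia) x). lra.
  - intros n. exists (max n (S k)). rewrite <- flattened_shift by lia.
    apply flattened_antitone. lia.
Qed.

Lemma flattened_inf_dominated_sublinear : dominated_sublinear flattened_inf.
Proof.
  split; [|split].
  - intros x y. apply (Inf_add_le _ _ _ 0%nat 0%nat); [apply flattened_bounded_below|].
    intros n m. exists (max n m).
    pose proof (flattened_dominated_sublinear (max n m)) as [Ha _].
    pose proof (flattened_antitone n (max n m) ltac:(lia) x).
    pose proof (flattened_antitone m (max n m) ltac:(lia) y).
    specialize (Ha x y). lra.
  - intros a x Ha. unfold flattened_inf.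
    rewrite <- Inf_scal by (exact 0%nat || assumption || apply flattened_bounded_below).
    f_equal. apply functional_extensionality. intros n.
    apply flattened_dominated_sublinear, Ha.
  - intros x. apply (flattened_inf_le 0).
Qed.

End Flattening.

Lemma dominated_sublinear_odd_of_dense (L : E -> R) : dominated_sublinear L ->
  (forall x eps, 0 < eps -> exists v, norm (vsub x v) < eps /\ L v + L (vopp v) = 0) ->
  forall x, L (vopp x) = - L x.
Proof.
  intros HL Hd x. pose proof (sublinear_opp_ge0 L HL x).
  destruct HL as [Ha [_ Hn]].
  (* [L x + L (-x)] is at most [2 ||x - v||] for every [v] on which [L] is odd. *)
  assert (Hsmall : forall eps, 0 < eps -> L x + L (vopp x) <= 2 * eps).
  { intros eps He. destruct (Hd x eps He) as [v [Hv Hv0]].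
    pose proof (Ha (vsub x v) v) as A1. rewrite vsubK in A1.
    pose proof (Ha (vopp (vsub x v)) (vopp v)) as A2.
    rewrite <- vopp_add, vsubK in A2.
    pose proof (Hn (vsub x v)). pose proof (Hn (vopp (vsub x v))) as A3.
    rewrite norm_opp in A3. lra. }
  destruct (Rle_lt_dec (L x + L (vopp x)) 0) as [Hle|Hlt]; [lra|].
  specialize (Hsmall ((L x + L (vopp x)) / 4) ltac:(lra)). lra.
Qed.

Lemma odd_dominated_sublinear_linear (L : E -> R) : dominated_sublinear L ->
  (forall x, L (vopp x) = - L x) ->
  is_linear_functional L /\ contractive L.
Proof.
  intros HL Hodd. pose proof HL as [Ha [_ Hn]].
  split; [split|].
  - intros x y. apply Rle_antisym; [apply Ha|].
    pose proof (Ha (vopp x) (vopp y)) as H. rewrite <- vopp_add, !Hodd in H. lra.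
  - intros a x. destruct (Rle_lt_dec 0 a) as [Ha0|Ha0].
    + apply sublinear_scal_ge0; assumption.
    + replace (vscal a x) with (vopp (vscal (-a) x))
        by (rewrite vopp_scal, vscal_assoc; f_equal; ring).
      rewrite Hodd, sublinear_scal_ge0 by (assumption || lra). ring.
  - intros x. apply Rabs_le. pose proof (Hn x). pose proof (Hn (vopp x)).
    rewrite Hodd, norm_opp in *. lra.
Qed.

Lemma exists_contractive_functional_at (HS : separable E) (u : E) : norm u = 1 ->
  exists lam : E -> R, is_linear_functional lam /\ contractive lam /\ lam u = 1.
Proof.
  intros Hu. destruct HS as [d Hd].
  set (dirs := fun n => match n with 0%nat => u | S k => d k end).
  pose proof (flattened_inf_dominated_sublinear dirs) as HL.
  assert (Hline : forall k s,
    flattened_inf dirs (vscal s (dirs k)) = s * flattened dirs k (dirs k)).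
  { intros k s. rewrite <- (vadd_0l _ (vscal s (dirs k))), flattened_inf_shift,
      (sublinear_zero _ HL). ring. }
  destruct (odd_dominated_sublinear_linear _ HL) as [Hlin Hb].
  - apply dominated_sublinear_odd_of_dense; [exact HL|].
    intros x eps He. destruct (Hd x eps He) as [n Hn]. exists (d n). split; [exact Hn|].
    rewrite vopp_scal, <- (vscal_1 _ (d n)) at 1.
    change (d n) with (dirs (S n)). rewrite !Hline. ring.
  - exists (flattened_inf dirs). split; [exact Hlin | split; [exact Hb|]].
    pose proof (Hline 0%nat 1) as H1. change (dirs 0%nat) with u in H1.
    rewrite vscal_1 in H1. simpl in H1. rewrite H1, Hu. ring.
Qed.

End HahnBanach.

Lemma Rabs_le_inv (a b : R) : Rabs a <= b -> - b <= a <= b.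
Proof.
  intros H. pose proof (Rle_abs a). pose proof (Rle_abs (- a)).
  rewrite Rabs_Ropp in *. lra.
Qed.

Lemma contractive_norms (E : NormedSpace) (lam : E -> R) (v : E) :
  is_linear_functional lam -> contractive lam ->
  norm v = 1 -> lam v = 1 -> in_dual lam /\ norms lam v.
Proof.
  intros Hlam Hb Hv Hlv. split; [split; [exact Hlam|]|].
  - exists 1. intros x. rewrite Rmult_1_l. apply Hb.
  - split; [split | split; assumption].
    + intros t [y [Hy ->]]. specialize (Hb y). lra.
    + intros b Hub. apply Hub. exists v. split; [lra|]. rewrite Hlv, Rabs_R1. reflexivity.
Qed.

Section Orbit.
Variables (E : NormedSpace) (g : E -> E).
Hypotheses (Hg : is_linear g) (Hiso : forall x, norm (g x) = norm x).

Lemma is_linear_iter n : is_linear (Nat.iter n g).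
Proof.
  destruct Hg as [Hadd Hsc].
  induction n as [|n [IHa IHs]]; split; intros; simpl; auto.
  - rewrite IHa. apply Hadd.
  - rewrite IHs. apply Hsc.
Qed.

Lemma norm_iter n x : norm (Nat.iter n g x) = norm x.
Proof. induction n; simpl; [reflexivity | rewrite Hiso; exact IHn]. Qed.

Lemma iter_displacement n x :
  Nat.iter n g (vsub (g x) x) = vsub (Nat.iter (S n) g x) (Nat.iter n g x).
Proof.
  destruct (is_linear_iter n) as [Hadd Hsc].
  unfold vsub. rewrite Hadd, !vopp_scal, Hsc, Nat.iter_succ_r. reflexivity.
Qed.

Lemma norming_orbit (lam : E -> R) :
  (forall v, norm v = 1 -> lam v = 1 -> lam (g v) = 1) ->
  forall u, norm u = 1 -> lam u = 1 -> forall n, lam (Nat.iter n g u) = 1.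
Proof.
  intros Hstays u Hu Hlu n. induction n as [|n IHn]; [exact Hlu|].
  apply (Hstays (Nat.iter n g u)); [rewrite norm_iter; exact Hu | exact IHn].
Qed.

Section Functional.
Variables (lam : E -> R) (Hlam : is_linear_functional lam).
Hypothesis Hcontr : contractive lam.

Lemma orbit_functional_linear_growth x c :
  (forall n, lam (Nat.iter n g (vsub (g x) x)) = c) ->
  forall N, lam (Nat.iter N g x) = lam x + INR N * c.
Proof.
  destruct Hlam as [Ladd Lsc]. intros Hc N. induction N as [|N IHN]; [simpl; ring|].
  specialize (Hc N). rewrite iter_displacement in Hc. unfold vsub in Hc.
  rewrite Ladd, vopp_scal, Lsc in Hc. rewrite S_INR. lra.
Qed.

Lemma orbit_displacement_nonpos x c :
  (forall n, lam (Nat.iter n g (vsub (g x) x)) = c) -> c <= 0.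
Proof.
  intros Hc. apply Rnot_lt_le. intros Hpos.
  destruct (INR_unbounded (2 * norm x / c)) as [N HN].
  pose proof (orbit_functional_linear_growth x c Hc N) as HN'.
  pose proof (Rabs_le_inv _ _ (Hcontr x)).
  pose proof (Rabs_le_inv _ _ (Hcontr (Nat.iter N g x))) as Hb. rewrite norm_iter in Hb.
  assert (2 * norm x < INR N * c).
  { apply Rmult_lt_compat_r with (r := c) in HN; [|lra].
    unfold Rdiv in HN. rewrite Rmult_assoc, Rinv_l in HN; lra. }
  lra.
Qed.

End Functional.

Lemma fixed_of_norming_preserved (HS : separable E) :
  (forall lam v, is_linear_functional lam -> contractive lam ->
     norm v = 1 -> lam v = 1 -> lam (g v) = 1) ->
  forall x, g x = x.
Proof.
  intros Hpres x0. apply NNPP. intros Hx0.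
  pose proof (norm_vsub_pos E _ _ Hx0) as Hz. set (z := vsub (g x0) x0) in *.
  set (u := vscal (/ norm z) z).
  destruct (exists_contractive_functional_at E HS u (norm_normalize E z Hz))
    as [lam [Hlam [Hcontr Hlu]]].
  assert (Horbit : forall n, lam (Nat.iter n g z) = norm z).
  { intros n. rewrite <- (normalizeK E z Hz) at 1. fold u.
    destruct (is_linear_iter n) as [_ Hsc]. pose proof Hlam as [_ Lsc].
    rewrite Hsc, Lsc, (norming_orbit lam (fun v => Hpres lam v Hlam Hcontr) u
      (norm_normalize E z Hz) Hlu). ring. }
  pose proof (orbit_displacement_nonpos lam Hlam Hcontr x0 _ Horbit). lra.
Qed.

End Orbit.

Theorem lemma4p4 (E : NormedSpace) (HB : complete E) (HS : separable E)
  (g : E -> E) (Hg : linear_isometric_automorphism g)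
  (Hneq : ~ (forall x, g x = x)) :
  exists (x : E) (lam : E -> R),
    in_dual lam /\ norms lam x /\ ~ norms lam (g x) /\
    dual_norm_is lam 1 /\ norm x = 1 /\ lam x = 1 /\ lam (g x) < 1.
Proof.
  destruct Hg as [Hlin [Hiso _]].
  apply NNPP. intros Hno. apply Hneq, (fixed_of_norming_preserved E g Hlin Hiso HS).
  intros lam v Hlam Hcontr Hv Hlv. apply Rle_antisym.
  - pose proof (Rabs_le_inv _ _ (Hcontr (g v))). rewrite Hiso in *. lra.
  - apply Rnot_lt_le. intros Hlt. apply Hno. exists v, lam.
    destruct (contractive_norms E lam v Hlam Hcontr Hv Hlv) as [Hin Hn].
    split; [exact Hin|]. split; [exact Hn|]. split; [intros [_ [_ H]]; lra|].
    split; [apply Hn | auto].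
Qed.
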